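(* Let $m,n\ge 1$ and let $T$ be an invertible $mn\times mn$ Toeplitz-block Toeplitz matrix $T=\{\mathcal{T}_{i-k}\}_{i,k=1}^n$, $\mathcal{T}_r=\{t_r^{(j-\ell)}\}_{j,\ell=1}^m$. Define $$\omega(\lambda,\mu)=\mathbf{1}^*(A_1^*-\mu_1 I)^{-1}(A_2^*-\mu_2 I)^{-1}T^{-1}(A_2-\lambda_2 I)^{-1}(A_1-\lambda_1 I)^{-1}\mathbf{1},$$ $$u(\mu)=\mathbf{1}^*(A_1^*-\mu_1 I)^{-1}(A_2^*-\mu_2 I)^{-1}\Gamma-\mathrm{i}\begin{bmatrix}\mathbf{1}_m^*(\mathcal{A}_2^*-\mu_2 I_m)^{-1} & 0 & \mathbf{1}_n^*(\mathcal{A}_1^*-\mu_1 I_n)^{-1} & 0\end{bmatrix},$$ $$\widehat u(\lambda)=\widehat\Gamma(A_2-\lambda_2 I)^{-1}(A_1-\lambda_1 I)^{-1}\mathbf{1}+\mathrm{i}\begin{bmatrix}0\\ (\mathcal{A}_2-\lambda_2 I_m)^{-1}\mathbf{1}_m\\ 0\\ (\mathcal{A}_1-\lambda_1 I_n)^{-1}\mathbf{1}_n\end{bmatrix},$$ where in $u$ the blocks have lengths $m,m,n,n$ and in $\widehat u$ the blocks have heights $m,m,n,n$. Then for $p=1$ and $p=2$, $$\omega(\lambda,\mu)=\mathrm{i}(\lambda_p-\mu_p)^{-1}u(\mu)P_p\widehat u(\lambda).$$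
   Context: $\mathrm{i}$ is the imaginary unit, $I_r$ the $r\times r$ identity, $I=I_{mn}$, $\mathbf{1}_r$ the column of length $r$ with all entries $1$, $\mathbf{1}=\mathbf{1}_{mn}$; $^*$ is conjugate transpose. The entry $t_r^{(s)}$ of the block $\mathcal T_{i-k}$ at position $(j,\ell)$ sits in row $m(i-1)+j$, column $m(k-1)+\ell$ of $T$. For $N\ge1$ let $\mathcal{A}^{(N)}=\{a_{j-\ell}\}_{j,\ell=1}^N$ with $a_r=0$ for $r<0$, $a_0=\mathrm{i}/2$, $a_r=\mathrm{i}$ for $r>0$. Put $\mathcal A_1=\mathcal A^{(n)}$, $\mathcal A_2=\mathcal A^{(m)}$, $A_1=\{a_{i-k}I_m\}_{i,k=1}^n$ (i.e. $\mathcal A_1\otimes I_m$) and $A_2=\mathrm{diag}\{\mathcal A_2,\dots,\mathcal A_2\}$ ($n$ diagonal blocks). Define: $M_{11}=\mathrm{col}[\mathcal M_{11}^{(1)},\dots,\mathcal M_{11}^{(n)}]$ with $\mathcal M_{11}^{(i)}=\frac12\mathcal T_0+\sum_{s=1}^{i-1}\mathcal T_s$; $M_{21}=[I_m\ I_m\ \cdots\ I_m]$ ($m\times mn$); $M_{31}=M_{21}^*$; $M_{41}=[\mathcal M_{41}^{(1)}\ \cdots\ \mathcal M_{41}^{(n)}]$ with $\mathcal M_{41}^{(k)}=\frac12\mathcal T_0+\sum_{s=1}^{k-1}\mathcal T_{-s}$. For each $r$ let $\mathcal M_{12}^{(r)}$ be the $m\times1$ column whose $j$-th entry is $\frac12 t_r^{(0)}+\sum_{s=1}^{j-1}t_r^{(s)}$,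 and $\mathcal M_{42}^{(r)}$ the $1\times m$ row whose $\ell$-th entry is $\frac12 t_r^{(0)}+\sum_{s=1}^{\ell-1}t_r^{(-s)}$. Let $M_{12}=\{\mathcal M_{12}^{(i-k)}\}_{i,k=1}^n$ ($mn\times n$), $M_{22}=\mathrm{diag}\{\mathbf 1_m^*,\dots,\mathbf 1_m^*\}$ ($n\times mn$), $M_{32}=M_{22}^*$, $M_{42}=\{\mathcal M_{42}^{(i-k)}\}_{i,k=1}^n$ ($n\times mn$). Let $\Pi_p=[M_{1p}\ M_{3p}]$, $\widehat\Pi_p=\begin{bmatrix}M_{2p}\\ M_{4p}\end{bmatrix}$, $\Gamma_p=T^{-1}\Pi_p$, $\widehat\Gamma_p=\widehat\Pi_pT^{-1}$ ($p=1,2$), $\Gamma=[\Gamma_1\ \Gamma_2]$, $\widehat\Gamma=\begin{bmatrix}\widehat\Gamma_1\\ \widehat\Gamma_2\end{bmatrix}$. Finally $P_1=\mathrm{diag}\{I_{2m},0_{2n}\}$ and $P_2=I_{2(m+n)}-P_1$. *)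

From HB Require Import structures.
From mathcomp Require Import all_boot all_order all_algebra.
Set Implicit Arguments. Unset Strict Implicit. Unset Printing Implicit Defensive.
Import Order.TTheory GRing.Theory Num.Theory.
Local Open Scope ring_scope.

(* Conventions: all indices are 0-based.  An index a : 'I_(m*n) corresponds to
   the paper's row m(i-1)+j with i-1 = a %/ m, j-1 = a %% m.
   t r s stands for t_r^{(s)} (only |r| < n, |s| < m matter). *)

Section Defs.
Variable C : numClosedFieldType.

Definition ctr (p q : nat) (A : 'M[C]_(p, q)) : 'M[C]_(q, p) :=
  (map_mx Num.conj A)^T.

Definition ones (r : nat) : 'cV[C]_r := const_mx 1.

Definition tbt (m n : nat) (t : int -> int -> C) : 'M[C]_(m * n) :=
  \matrix_(a, b) t ((a %/ m)%N%:Z - (b %/ m)%N%:Z) ((a %% m)%N%:Z - (b %% m)%N%:Z).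

Definition aseq (r : int) : C :=
  if r < 0 then 0 else if r == 0 then 'i / 2%:R else 'i.

Definition calA (N : nat) : 'M[C]_N :=
  \matrix_(j, l) aseq (j%:Z - l%:Z).

(* A_1 = \mathcal A_1 \otimes I_m *)
Definition A1 (m n : nat) : 'M[C]_(m * n) :=
  \matrix_(a, b) (aseq ((a %/ m)%N%:Z - (b %/ m)%N%:Z) * (((a %% m)%N == (b %% m)%N)%:R)).

(* A_2 = diag(\mathcal A_2, ..., \mathcal A_2) *)
Definition A2 (m n : nat) : 'M[C]_(m * n) :=
  \matrix_(a, b) ((((a %/ m)%N == (b %/ m)%N)%:R) * aseq ((a %% m)%N%:Z - (b %% m)%N%:Z)).

Section Ms.
Variables (m n : nat) (t : int -> int -> C).

Definition M11 : 'M[C]_(m * n, m) :=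
  \matrix_(a, l) (t 0 ((a %% m)%N%:Z - l%:Z) / 2%:R
     + \sum_(1%N <= s < ((a %/ m)%N).+1) t s%:Z ((a %% m)%N%:Z - l%:Z)).
Definition M21 : 'M[C]_(m, m * n) := \matrix_(j, b) (((b %% m)%N == j)%:R).
Definition M31 : 'M[C]_(m * n, m) := ctr M21.
Definition M41 : 'M[C]_(m, m * n) :=
  \matrix_(j, b) (t 0 (j%:Z - (b %% m)%N%:Z) / 2%:R
     + \sum_(1%N <= s < ((b %/ m)%N).+1) t (- s%:Z) (j%:Z - (b %% m)%N%:Z)).

Definition M12 : 'M[C]_(m * n, n) :=
  \matrix_(a, k) (t ((a %/ m)%N%:Z - k%:Z) 0 / 2%:R
     + \sum_(1%N <= s < ((a %% m)%N).+1) t ((a %/ m)%N%:Z - k%:Z) s%:Z).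
Definition M22 : 'M[C]_(n, m * n) := \matrix_(i, b) (((b %/ m)%N == i)%:R).
Definition M32 : 'M[C]_(m * n, n) := ctr M22.
Definition M42 : 'M[C]_(n, m * n) :=
  \matrix_(i, b) (t (i%:Z - (b %/ m)%N%:Z) 0 / 2%:R
     + \sum_(1%N <= s < ((b %% m)%N).+1) t (i%:Z - (b %/ m)%N%:Z) (- s%:Z)).

Definition Tm := tbt m n t.
Definition Pi1 : 'M[C]_(m * n, m + m) := row_mx M11 M31.
Definition Pi2 : 'M[C]_(m * n, n + n) := row_mx M12 M32.
Definition Pih1 : 'M[C]_(m + m, m * n) := col_mx M21 M41.
Definition Pih2 : 'M[C]_(n + n, m * n) := col_mx M22 M42.
Definition Gamma1 := invmx Tm *m Pi1.
Definition Gamma2 := invmx Tm *m Pi2.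
Definition Gammah1 := Pih1 *m invmx Tm.
Definition Gammah2 := Pih2 *m invmx Tm.
Definition Gamma : 'M[C]_(m * n, (m + m) + (n + n)) := row_mx Gamma1 Gamma2.
Definition Gammah : 'M[C]_((m + m) + (n + n), m * n) := col_mx Gammah1 Gammah2.

Definition P1 : 'M[C]_((m + m) + (n + n)) := block_mx 1%:M 0 0 0.
Definition P2 : 'M[C]_((m + m) + (n + n)) := 1%:M - P1.

Definition Id := (1%:M : 'M[C]_(m * n)).

Definition omega (l1 l2 mu1 mu2 : C) : C :=
  (ctr (ones (m * n))
   *m invmx (ctr (A1 m n) - mu1 *: Id) *m invmx (ctr (A2 m n) - mu2 *: Id)
   *m invmx Tm *m invmx (A2 m n - l2 *: Id) *m invmx (A1 m n - l1 *: Id)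
   *m ones (m * n)) ord0 ord0.

Definition u (mu1 mu2 : C) : 'rV[C]_((m + m) + (n + n)) :=
  ctr (ones (m * n)) *m invmx (ctr (A1 m n) - mu1 *: Id)
    *m invmx (ctr (A2 m n) - mu2 *: Id) *m Gamma
  - 'i *: row_mx
      (row_mx (ctr (ones m) *m invmx (ctr (calA m) - mu2 *: 1%:M)) 0)
      (row_mx (ctr (ones n) *m invmx (ctr (calA n) - mu1 *: 1%:M)) 0).

Definition uh (l1 l2 : C) : 'cV[C]_((m + m) + (n + n)) :=
  Gammah *m invmx (A2 m n - l2 *: Id) *m invmx (A1 m n - l1 *: Id)
    *m ones (m * n)
  + 'i *: col_mx
      (col_mx 0 (invmx (calA m - l2 *: 1%:M) *m ones m))
      (col_mx 0 (invmx (calA n - l1 *: 1%:M) *m ones n)).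

End Ms.
End Defs.

From HB Require Import structures.
From mathcomp Require Import all_boot all_order all_algebra.
From mathcomp Require Import zify ring.
Set Implicit Arguments. Unset Strict Implicit. Unset Printing Implicit Defensive.
Import Order.TTheory GRing.Theory Num.Theory.
Local Open Scope ring_scope.

(* A_p is, up to the 1/2 on its diagonal, the summation operator in the
   p-th block index, so T has low displacement rank with respect to it:
   A_p T - T A_p^* = i (M_1p M_2p + M_3p M_4p).  Hence X = T^-1 satisfies a Sylvester
   equation X A_p - A_p^* X = i X Pi_p Pih_p X, and sandwiching it between resolvents
   of A_p gives
     (l_p - mu_p) R^*(mu_p) X R(l_p)
       = X R(l_p) - R^*(mu_p) X + i R^*(mu_p) X Pi_p Pih_p X R(l_p).
   The last term is the Gamma-part of u P_p uh.  In the first two, the all-ones vector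
   meets the resolvent of the other operator A_q, which M_3p and M_2p intertwine with
   the compressed operator calA_q while mapping all-ones vectors onto each other;
   since i^2 = -1 these two terms are exactly the i-corrections in u and uh. *)

Section Resolvent.
Variable R : comUnitRingType.

Definition resolvent N (A : 'M[R]_N) (z : R) : 'M[R]_N := invmx (A - z *: 1%:M).

Lemma shift_intertwine p q (B : 'M[R]_p) (D : 'M[R]_q) (M : 'M[R]_(p, q)) z :
  B *m M = M *m D -> (B - z *: 1%:M) *m M = M *m (D - z *: 1%:M).
Proof.
by move=> BM; rewrite mulmxBl mulmxBr BM -scalemxAl -scalemxAr mul1mx mulmx1.
Qed.

Lemma invmx_intertwine p q (P : 'M[R]_p) (Q : 'M[R]_q) (M : 'M[R]_(p, q)) :
  P \in unitmx -> Q \in unitmx -> P *m M = M *m Q -> invmx P *m M = M *m invmx Q.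
Proof.
move=> uP uQ PM; rewrite -[LHS]mulmx1 -(mulmxV uQ) mulmxA -(mulmxA _ M) -PM.
by rewrite mulmxA mulVmx // mul1mx.
Qed.

Lemma resolvent_intertwine p q (B : 'M[R]_p) (D : 'M[R]_q) (M : 'M[R]_(p, q)) z :
  B - z *: 1%:M \in unitmx -> D - z *: 1%:M \in unitmx ->
  B *m M = M *m D -> resolvent B z *m M = M *m resolvent D z.
Proof. by move=> uB uD /(shift_intertwine z); exact: invmx_intertwine. Qed.

Lemma resolvent_comm N (P Q : 'M[R]_N) a b :
  P - a *: 1%:M \in unitmx -> Q - b *: 1%:M \in unitmx -> P *m Q = Q *m P ->
  resolvent P a *m resolvent Q b = resolvent Q b *m resolvent P a.
Proof.
move=> uP uQ PQ.
have PQs : (P - a *: 1%:M) *m (Q - b *: 1%:M) = (Q - b *: 1%:M) *m (P - a *: 1%:M).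
  apply: shift_intertwine; rewrite mulmxBr mulmxBl PQ -scalemxAr -scalemxAl.
  by rewrite mulmx1 mul1mx.
by rewrite /resolvent (invmx_intertwine uQ uQ (esym (invmx_intertwine uP uP PQs))).
Qed.

Lemma mulmx_resolventAC p N (Z : 'M[R]_(p, N)) (P Q : 'M[R]_N) a b :
  P - a *: 1%:M \in unitmx -> Q - b *: 1%:M \in unitmx -> P *m Q = Q *m P ->
  Z *m resolvent P a *m resolvent Q b = Z *m resolvent Q b *m resolvent P a.
Proof. by move=> uP uQ PQ; rewrite -!mulmxA resolvent_comm. Qed.

Lemma sylvester_resolvent N (A As X Y : 'M[R]_N) la mu :
  A - la *: 1%:M \in unitmx -> As - mu *: 1%:M \in unitmx ->
  X *m A - As *m X = Y ->
  (la - mu) *: (resolvent As mu *m X *m resolvent A la)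
  = X *m resolvent A la - resolvent As mu *m X
    + resolvent As mu *m Y *m resolvent A la.
Proof.
move=> uA uAs XAY.
have shifted : (As - mu *: 1%:M) *m X - X *m (A - la *: 1%:M) = (la - mu) *: X - Y.
  rewrite mulmxBl mulmxBr -XAY -scalemxAl -scalemxAr mul1mx mulmx1 scalerBl.
  by rewrite !opprB addrACA [RHS]addrACA [_ + la *: X]addrC.
move: shifted => /(congr1 (fun Z => resolvent As mu *m Z *m resolvent A la)).
rewrite /resolvent mulmxBr mulmxBl mulKmx // -mulmxA mulmxK // mulmxBr mulmxBl.
by rewrite -scalemxAr -scalemxAl => ->; rewrite subrK.
Qed.

Section Displacement.
Variables (N k : nat) (A As B Bs T : 'M[R]_N) (K Ks : 'M[R]_k).
Variables (Ma Mb : 'M[R]_(N, k)) (Mc Md : 'M[R]_(k, N)).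
Variables (e : 'cV[R]_N) (es : 'rV[R]_N) (f : 'cV[R]_k) (fs : 'rV[R]_k).
Variables (c la mu la' mu' : R).
Hypotheses (uT : T \in unitmx)
  (uA : A - la *: 1%:M \in unitmx) (uAs : As - mu *: 1%:M \in unitmx)
  (uB : B - la' *: 1%:M \in unitmx) (uBs : Bs - mu' *: 1%:M \in unitmx)
  (uK : K - la' *: 1%:M \in unitmx) (uKs : Ks - mu' *: 1%:M \in unitmx).
Hypothesis cc : c * c = -1.
Hypothesis displacement : A *m T - T *m As = c *: (Ma *m Mc + Mb *m Md).
Hypotheses (BMb : B *m Mb = Mb *m K) (Mbf : Mb *m f = e).
Hypotheses (McBs : Mc *m Bs = Ks *m Mc) (fsMc : fs *m Mc = es).

Local Notation RA := (resolvent A la).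
Local Notation RAs := (resolvent As mu).
Local Notation RB := (resolvent B la').
Local Notation RBs := (resolvent Bs mu').
Local Notation X := (invmx T).

(* Applied with A = A_p, B = A_q (q <> p), K = calA_q, (Ma, Mb, Mc, Md) =
   (M_1p, M_3p, M_2p, M_4p) and all-ones vectors e, f. *)
Lemma displacement_resolvent :
  (la - mu) *: (es *m RBs *m RAs *m X *m RA *m RB *m e)
  = c *: ((es *m RBs *m RAs *m (X *m row_mx Ma Mb) - c *: row_mx (fs *m resolvent Ks mu') 0)
          *m (col_mx Mc Md *m X *m RA *m RB *m e + c *: col_mx 0 (resolvent K la' *m f))).
Proof.
have XA : X *m A - As *m X = c *: (X *m (Ma *m Mc + Mb *m Md) *m X).
  rewrite scalemxAl scalemxAr -displacement mulmxBr mulmxBl !mulmxA mulVmx // mul1mx.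
  by rewrite -!mulmxA mulmxV // mulmx1.
have RBe : RB *m e = Mb *m (resolvent K la' *m f).
  by rewrite -Mbf !mulmxA (resolvent_intertwine uB uK BMb).
have esRBs : es *m RBs = fs *m resolvent Ks mu' *m Mc.
  by rewrite -fsMc -!mulmxA (resolvent_intertwine uKs uBs (esym McBs)).
have -> : (la - mu) *: (es *m RBs *m RAs *m X *m RA *m RB *m e)
    = es *m RBs *m ((la - mu) *: (RAs *m X *m RA)) *m RB *m e.
  by rewrite -scalemxAr -!scalemxAl !mulmxA.
rewrite (sylvester_resolvent uA uAs XA).
have KRK : forall P : 'rV_N, P *m Mb *m resolvent K la' *m f = P *m RB *m e.
  by move=> P; rewrite -!mulmxA -RBe.
rewrite scale_row_mx scaler0 opp_row_mx oppr0 !mul_mx_row add_row_mx addr0.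
rewrite !mul_col_mx scale_col_mx scaler0 add_col_mx addr0 mul_row_col.
rewrite !(mulmxDr, mulmxBr, mulmxDl, mulmxBl) -?scalemxAl -?scalemxAr !mulmxA.
do 3 rewrite ?(mulmxDr, mulmxDl, mulNmx, mulmxN) -?scalemxAl -?scalemxAr ?mulmxA.
(* After full expansion, c^2 = -1 matches the correction terms with the two
   non-Sylvester terms. *)
rewrite -esRBs KRK !scalerDr scalerN !scalerA cc !scaleN1r opprK.
by rewrite addrACA [in RHS](addrC (c *: _)) [in RHS](addrC (c *: _)).
Qed.

End Displacement.
End Resolvent.

Section BlockProjections.
Variables (R : pzRingType) (a b : nat).
Variables (x1 : 'rV[R]_a) (x2 : 'rV[R]_b) (y1 : 'cV[R]_a) (y2 : 'cV[R]_b).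

Lemma mul_row_P1_col :
  row_mx x1 x2 *m block_mx 1%:M 0 0 0 *m col_mx y1 y2 = x1 *m y1.
Proof.
by rewrite mul_row_block !mulmx0 mulmx1 !addr0 mul_row_col mul0mx addr0.
Qed.

Lemma mul_row_P2_col :
  row_mx x1 x2 *m (1%:M - block_mx 1%:M 0 0 0) *m col_mx y1 y2 = x2 *m y2.
Proof.
rewrite (scalar_mx_block a b) opp_block_mx add_block_mx subrr !oppr0 !addr0.
by rewrite mul_row_block !mulmx0 mulmx1 !addr0 add0r mul_row_col mul0mx add0r.
Qed.

End BlockProjections.

Lemma mx11_scale_eq (F : fieldType) (M N : 'M[F]_1) w c :
  w != 0 -> w *: M = c *: N -> M ord0 ord0 = c / w * N ord0 ord0.
Proof.
by move=> w_neq0 /matrixP/(_ ord0 ord0); rewrite !mxE mulrAC => <-; rewrite mulrC mulKf.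
Qed.

Section Invertibility.
Variable C : numClosedFieldType.

Lemma trig_shift_unitmx N (L : 'M[C]_N) d x :
  is_trig_mx L -> (forall i, L i i = d) -> x != d -> L - x *: 1%:M \in unitmx.
Proof.
move=> /is_trig_mxP trL dL xd; rewrite unitmxE unitfE det_trig.
  by apply/prodf_neq0 => i _; rewrite !mxE dL eqxx mulr1 subr_eq0 eq_sym.
apply/is_trig_mxP => i j ij; rewrite !mxE trL //.
by case: eqP ij => [->|_]; rewrite ?ltnn // mulr0 subr0.
Qed.

Lemma ctr_trig_shift_unitmx N (L : 'M[C]_N) d x :
  is_trig_mx L -> (forall i, L i i = d) -> x != d^* -> ctr L - x *: 1%:M \in unitmx.
Proof.
move=> /is_trig_mxP trL dL xd; rewrite -unitmx_tr.
have -> : (ctr L - x *: 1%:M)^T = map_mx Num.conj L - x *: 1%:M.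
  by apply/matrixP => i j; rewrite !mxE eq_sym.
apply: (trig_shift_unitmx (d := d^*)) xd => [|i]; last by rewrite mxE dL.
by apply/is_trig_mxP => i j ij; rewrite mxE trL // conjC0.
Qed.

End Invertibility.

Section BlockIndex.
Variables m n : nat.

Lemma block_index_subproof (i : 'I_n) (j : 'I_m) : (i * m + j < m * n)%N.
Proof. have := ltn_ord i; have := ltn_ord j; nia. Qed.

Definition block_index (i : 'I_n) (j : 'I_m) : 'I_(m * n) :=
  Ordinal (block_index_subproof i j).

Lemma block_index_div i j : (block_index i j %/ m)%N = i.
Proof.
have m_gt0 : (0 < m)%N by case: j => j; case: m.
by rewrite /= divnMDl // divn_small // addn0.
Qed.

Lemma block_index_mod i j : (block_index i j %% m)%N = j.
Proof. by rewrite /= modnMDl modn_small. Qed.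

Lemma block_of_subproof (a : 'I_(m * n)) : (a %/ m < n)%N.
Proof.
have m_gt0 : (0 < m)%N by case: a => a; case: m.
by rewrite ltn_divLR // -[(n * m)%N]mulnC.
Qed.

Lemma offset_of_subproof (a : 'I_(m * n)) : (a %% m < m)%N.
Proof. by rewrite ltn_pmod //; case: a => a; case: m. Qed.

Definition block_of (a : 'I_(m * n)) : 'I_n := Ordinal (block_of_subproof a).
Definition offset_of (a : 'I_(m * n)) : 'I_m := Ordinal (offset_of_subproof a).

Lemma block_indexK a : block_index (block_of a) (offset_of a) = a.
Proof. by apply: val_inj; rewrite /= -divn_eq. Qed.

Lemma block_index_ind (P : 'I_(m * n) -> Prop) :
  (forall i j, P (block_index i j)) -> forall a, P a.
Proof. by move=> Pij a; rewrite -(block_indexK a). Qed.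

Lemma sum_block_index (V : nmodType) (F : 'I_(m * n) -> V) :
  \sum_(a < m * n) F a = \sum_(i < n) \sum_(j < m) F (block_index i j).
Proof.
rewrite pair_big (reindex (fun p : 'I_n * 'I_m => block_index p.1 p.2)) //=.
exists (fun a => (block_of a, offset_of a)) => [[i j] _ | a _]; last exact: block_indexK.
by congr pair; apply: val_inj; rewrite /= ?block_index_div ?block_index_mod.
Qed.

End BlockIndex.

Section DeltaSums.
Variable R : pzSemiRingType.
Variables (N : nat) (F : 'I_N -> R) (j0 : 'I_N).

Lemma sum_delta_l : \sum_(j < N) ((j0 : nat) == j)%:R * F j = F j0.
Proof.
rewrite (bigD1 j0) //= eqxx mul1r big1 ?addr0 // => j nj.
have /negPf -> : (j0 : nat) != j by rewrite eq_sym.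
by rewrite mul0r.
Qed.

Lemma sum_delta_r : \sum_(j < N) F j * ((j0 : nat) == j)%:R = F j0.
Proof.
rewrite (bigD1 j0) //= eqxx mulr1 big1 ?addr0 // => j nj.
have /negPf -> : (j0 : nat) != j by rewrite eq_sym.
by rewrite mulr0.
Qed.

Lemma sum_delta_l_sym : \sum_(j < N) ((j : nat) == j0)%:R * F j = F j0.
Proof. by under eq_bigr => j _ do rewrite eq_sym; exact: sum_delta_l. Qed.

Lemma sum_delta_r_sym : \sum_(j < N) F j * ((j : nat) == j0)%:R = F j0.
Proof. by under eq_bigr => j _ do rewrite eq_sym; exact: sum_delta_r. Qed.

End DeltaSums.

Section Aseq.
Variable C : numClosedFieldType.

Lemma aseq_gt0 (r : int) : 0 < r -> aseq C r = 'i.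
Proof. by move=> r_gt0; rewrite /aseq ltNge ltW //= gt_eqF. Qed.

Lemma aseq_lt0 (r : int) : r < 0 -> aseq C r = 0.
Proof. by move=> r_lt0; rewrite /aseq r_lt0. Qed.

Lemma conj_ihalf : ('i / 2%:R : C)^* = - ('i / 2%:R).
Proof.
have -> : ('i / 2%:R : C)^* = 'i^* / (2%:R)^* by exact: fmorph_div.
by rewrite conjCi conjC_nat mulNr.
Qed.

Lemma aseq_conj r : (aseq C r)^* = - aseq C r.
Proof.
rewrite /aseq; case: ifP => _; first by rewrite conjC0 oppr0.
by case: ifP => _; rewrite ?conj_ihalf ?conjCi.
Qed.

Lemma sum_aseq_mul N (i : 'I_N) (G : nat -> C) :
  \sum_(x < N) aseq C (i%:Z - x%:Z) * G x
  = 'i / 2%:R * G i + 'i * \sum_(0 <= x < i) G x.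
Proof.
rewrite -(big_mkord xpredT (fun x => aseq C (i%:Z - x%:Z) * G x)).
rewrite (@big_cat_nat _ _ _ i) //=; last exact: ltnW.
rewrite (big_ltn (ltn_ord i)) /= subrr.
rewrite [X in _ + (_ + X)]big_nat_cond [X in _ + (_ + X)]big1 ?addr0; last first.
  by move=> x /andP[/andP[ix _] _]; rewrite aseq_lt0 ?mul0r //; lia.
rewrite addrC mulr_sumr; congr (_ + _).
rewrite big_nat_cond [RHS]big_nat_cond; apply: eq_bigr => x /andP[/andP[_ xi] _].
by rewrite aseq_gt0 //; lia.
Qed.

(* Both sides sum tau over the differences -k..i, each once. *)
Lemma sum_window (tau : int -> C) (i k : nat) :
  \sum_(0 <= x < i.+1) tau (x%:Z - k%:Z) + \sum_(0 <= x < k) tau (i%:Z - x%:Z)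
  = tau 0 + \sum_(1 <= s < i.+1) tau s%:Z + \sum_(1 <= s < k.+1) tau (- s%:Z).
Proof.
elim: k => [|k IH].
  rewrite [X in _ + X = _]big_geq // [X in _ = _ + X]big_geq // !addr0 big_ltn //.
  by congr (tau _ + _); apply: eq_bigr => x _; rewrite subr0.
rewrite [\sum_(0 <= x < k.+1) _]big_nat_recr // [\sum_(1 <= s < k.+2) _]big_nat_recr //=.
rewrite [in RHS]addrA -IH.
have shift : \sum_(0 <= x < i.+1) tau (x%:Z - k%:Z) - \sum_(0 <= x < i.+1) tau (x%:Z - k.+1%:Z)
    = tau (i%:Z - k%:Z) - tau (- k.+1%:Z).
  rewrite -sumrB (@telescope_sumr_eq _ 0 i.+1 (fun x : nat => tau (x%:Z - k.+1%:Z))) //=.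
    by congr (tau _ - tau _); lia.
  by move=> x _; congr (tau _ - _); lia.
move/eqP: shift; rewrite subr_eq => /eqP ->; ring.
Qed.

Lemma aseq_displacement_entry N (i k : 'I_N) (tau : int -> C) :
  \sum_(x < N) aseq C (i%:Z - x%:Z) * tau (x%:Z - k%:Z)
  - \sum_(x < N) tau (i%:Z - x%:Z) * (aseq C (k%:Z - x%:Z))^*
  = 'i * (tau 0 / 2%:R + \sum_(1 <= s < i.+1) tau s%:Z
          + (tau 0 / 2%:R + \sum_(1 <= s < k.+1) tau (- s%:Z))).
Proof.
rewrite (sum_aseq_mul i (fun x => tau (x%:Z - k%:Z))).
under [X in _ - X]eq_bigr => x _ do rewrite aseq_conj mulrN mulrC.
rewrite sumrN opprK (sum_aseq_mul k (fun x => tau (i%:Z - x%:Z))).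
rewrite [in RHS]addrACA -splitr addrA.
have := sum_window tau i k; rewrite big_nat_recr //= => <-.
by field.
Qed.

End Aseq.

Section DisplacementStructure.
Variable C : numClosedFieldType.
Variables (m n : nat) (t : int -> int -> C).

Lemma conjCM (x y : C) : (x * y)^* = x^* * y^*.
Proof. exact: rmorphM. Qed.

Lemma ctrM p q r (A : 'M[C]_(p, q)) (B : 'M[C]_(q, r)) : ctr (A *m B) = ctr B *m ctr A.
Proof. by rewrite /ctr map_mxM trmx_mul. Qed.

Lemma A1_displacement : A1 C m n *m Tm m n t - Tm m n t *m ctr (A1 C m n)
  = 'i *: (M11 m n t *m M21 C m n + M31 C m n *m M41 m n t).
Proof.
apply/matrixP => a b; move: a b; apply: block_index_ind => i j; apply: block_index_ind => k l.
rewrite /Tm /tbt /ctr /M11 /M21 /M31 /M41 /A1 !mxE !sum_block_index.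
under eq_bigr => ? _ do under eq_bigr => ? _ do
  rewrite !mxE !block_index_div !block_index_mod -mulrA.
under [X in _ - X]eq_bigr => ? _ do under eq_bigr => ? _ do
  rewrite !mxE !block_index_div !block_index_mod.
under eq_bigr => ? _ do rewrite -mulr_sumr sum_delta_l.
under [X in _ - X]eq_bigr => ? _ do under eq_bigr => ? _ do rewrite conjCM conjC_nat mulrA.
under [X in _ - X]eq_bigr => ? _ do rewrite sum_delta_r.
rewrite /ctr.
under [X in _ = _ * (X + _)]eq_bigr => ? _ do rewrite !mxE !block_index_mod.
under [X in _ = _ * (_ + X)]eq_bigr => ? _ do rewrite !mxE !block_index_mod conjC_nat.
rewrite sum_delta_r sum_delta_l !block_index_div.
exact: (aseq_displacement_entry i k (fun r => t r (j%:Z - l%:Z))).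
Qed.

Lemma A2_displacement : A2 C m n *m Tm m n t - Tm m n t *m ctr (A2 C m n)
  = 'i *: (M12 m n t *m M22 C m n + M32 C m n *m M42 m n t).
Proof.
apply/matrixP => a b; move: a b; apply: block_index_ind => i j; apply: block_index_ind => k l.
rewrite /Tm /tbt /ctr /M12 /M22 /M32 /M42 /A2 !mxE !sum_block_index.
under eq_bigr => ? _ do under eq_bigr => ? _ do
  rewrite !mxE !block_index_div !block_index_mod -mulrA.
under [X in _ - X]eq_bigr => ? _ do under eq_bigr => ? _ do
  rewrite !mxE !block_index_div !block_index_mod conjCM conjC_nat mulrCA.
under eq_bigr => ? _ do rewrite -mulr_sumr.
under [X in _ - X]eq_bigr => ? _ do rewrite -mulr_sumr.
rewrite !sum_delta_l /ctr.
under [X in _ = _ * (X + _)]eq_bigr => ? _ do rewrite !mxE !block_index_div.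
under [X in _ = _ * (_ + X)]eq_bigr => ? _ do rewrite !mxE !block_index_div conjC_nat.
rewrite sum_delta_r sum_delta_l !block_index_mod.
exact: (aseq_displacement_entry j l (t (i%:Z - k%:Z))).
Qed.

Lemma A2_M31 : A2 C m n *m M31 C m n = M31 C m n *m calA C m.
Proof.
apply/matrixP => a q; move: a; apply: block_index_ind => i j.
rewrite /M31 /ctr /M21 /A2 /calA !mxE sum_block_index.
under eq_bigr => ? _ do under eq_bigr => ? _ do
  rewrite !mxE !block_index_div !block_index_mod conjC_nat -mulrA.
under eq_bigr => ? _ do rewrite -mulr_sumr.
rewrite sum_delta_l sum_delta_r_sym.
under eq_bigr => ? _ do rewrite !mxE block_index_mod conjC_nat.
by rewrite sum_delta_l.
Qed.

Lemma M31_ones : M31 C m n *m ones C m = ones C (m * n).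
Proof.
apply/matrixP => a q; move: a; apply: block_index_ind => i j.
rewrite /M31 /ctr /M21 /ones !mxE.
under eq_bigr => ? _ do rewrite !mxE block_index_mod conjC_nat.
by rewrite sum_delta_l.
Qed.

Lemma M21_A2_ctr : M21 C m n *m ctr (A2 C m n) = ctr (calA C m) *m M21 C m n.
Proof.
apply/matrixP => q b; move: b; apply: block_index_ind => k l.
rewrite /ctr /M21 /A2 /calA !mxE sum_block_index.
under eq_bigr => ? _ do under eq_bigr => ? _ do
  rewrite !mxE !block_index_div !block_index_mod conjCM conjC_nat mulrCA.
under eq_bigr => ? _ do rewrite -mulr_sumr.
rewrite sum_delta_l sum_delta_l_sym.
under eq_bigr => ? _ do rewrite !mxE block_index_mod.
by rewrite sum_delta_r.
Qed.

Lemma ones_M21 : ctr (ones C m) *m M21 C m n = ctr (ones C (m * n)).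
Proof.
apply/matrixP => q b; move: b; apply: block_index_ind => k l.
rewrite /ctr /M21 /ones !mxE.
under eq_bigr => ? _ do rewrite !mxE block_index_mod.
by rewrite sum_delta_r.
Qed.

Lemma A1_M32 : A1 C m n *m M32 C m n = M32 C m n *m calA C n.
Proof.
apply/matrixP => a q; move: a; apply: block_index_ind => i j.
rewrite /M32 /ctr /M22 /A1 /calA !mxE sum_block_index.
under eq_bigr => ? _ do under eq_bigr => ? _ do
  rewrite !mxE !block_index_div !block_index_mod conjC_nat mulrAC.
under eq_bigr => ? _ do rewrite sum_delta_r.
rewrite sum_delta_r_sym.
under eq_bigr => ? _ do rewrite !mxE block_index_div conjC_nat.
by rewrite sum_delta_l.
Qed.

Lemma M32_ones : M32 C m n *m ones C n = ones C (m * n).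
Proof.
apply/matrixP => a q; move: a; apply: block_index_ind => i j.
rewrite /M32 /ctr /M22 /ones !mxE.
under eq_bigr => ? _ do rewrite !mxE block_index_div conjC_nat.
by rewrite sum_delta_l.
Qed.

Lemma M22_A1_ctr : M22 C m n *m ctr (A1 C m n) = ctr (calA C n) *m M22 C m n.
Proof.
apply/matrixP => q b; move: b; apply: block_index_ind => k l.
rewrite /ctr /M22 /A1 /calA !mxE sum_block_index.
under eq_bigr => ? _ do under eq_bigr => ? _ do
  rewrite !mxE !block_index_div !block_index_mod conjCM conjC_nat mulrA.
under eq_bigr => ? _ do rewrite sum_delta_r.
rewrite sum_delta_l_sym.
under eq_bigr => ? _ do rewrite !mxE block_index_div.
by rewrite sum_delta_r.
Qed.

Lemma ones_M22 : ctr (ones C n) *m M22 C m n = ctr (ones C (m * n)).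
Proof.
apply/matrixP => q b; move: b; apply: block_index_ind => k l.
rewrite /ctr /M22 /ones !mxE.
under eq_bigr => ? _ do rewrite !mxE block_index_div.
by rewrite sum_delta_r.
Qed.

Lemma A1_A2_comm : A1 C m n *m A2 C m n = A2 C m n *m A1 C m n.
Proof.
apply/matrixP => a b; move: a b; apply: block_index_ind => i j; apply: block_index_ind => k l.
rewrite /A1 /A2 !mxE !sum_block_index.
under eq_bigr => ? _ do under eq_bigr => ? _ do
  rewrite !mxE !block_index_div !block_index_mod mulrACA.
under [RHS]eq_bigr => ? _ do under eq_bigr => ? _ do
  rewrite !mxE !block_index_div !block_index_mod mulrACA.
under eq_bigr => ? _ do rewrite -mulr_sumr sum_delta_l mulrAC.
under [RHS]eq_bigr => ? _ do rewrite -mulr_sumr sum_delta_r_sym -mulrA.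
by rewrite sum_delta_r_sym sum_delta_l.
Qed.

End DisplacementStructure.

Section ToeplitzTriangular.
Variable C : numClosedFieldType.

Lemma calA_trig N : is_trig_mx (calA C N).
Proof. by apply/is_trig_mxP => a b ab; rewrite mxE aseq_lt0 //; lia. Qed.

Lemma calA_diag N (a : 'I_N) : calA C N a a = 'i / 2%:R.
Proof. by rewrite mxE subrr. Qed.

Variables m n : nat.

Lemma A1_trig : is_trig_mx (A1 C m n).
Proof.
apply/is_trig_mxP; apply: block_index_ind => i j; apply: block_index_ind => k l /= lt.
rewrite mxE !block_index_div !block_index_mod.
have := ltn_ord l; have := ltn_ord j => jm lm.
case: (ltngtP i k) => [ik|ki|ik].
- by rewrite aseq_lt0 ?mul0r //; lia.
- by exfalso; nia.
- have /negPf -> : (j : nat) != l by lia.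
  by rewrite mulr0.
Qed.

Lemma A1_diag (a : 'I_(m * n)) : A1 C m n a a = 'i / 2%:R.
Proof. by rewrite mxE subrr eqxx mulr1. Qed.

Lemma A2_trig : is_trig_mx (A2 C m n).
Proof.
apply/is_trig_mxP; apply: block_index_ind => i j; apply: block_index_ind => k l /= lt.
rewrite mxE !block_index_div !block_index_mod.
have := ltn_ord l; have := ltn_ord j => jm lm.
case: (ltngtP i k) => [ik|ki|ik].
- by rewrite mul0r.
- by exfalso; nia.
- by rewrite aseq_lt0 ?mulr0 //; lia.
Qed.

Lemma A2_diag (a : 'I_(m * n)) : A2 C m n a a = 'i / 2%:R.
Proof. by rewrite mxE subrr eqxx mul1r. Qed.

End ToeplitzTriangular.

Section Representation.
Variables (C : numClosedFieldType) (m n : nat) (t : int -> int -> C) (l1 l2 mu1 mu2 : C).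
Hypotheses (uT : tbt m n t \in unitmx)
  (hl1 : l1 != 'i / 2%:R) (hl2 : l2 != 'i / 2%:R)
  (hmu1 : mu1 != - ('i / 2%:R)) (hmu2 : mu2 != - ('i / 2%:R)).

Let conj_ihalf_neq mu : mu != - ('i / 2%:R) -> mu != ('i / 2%:R : C)^*.
Proof. by rewrite conj_ihalf. Qed.

Let uA1 := trig_shift_unitmx (A1_trig C m n) (@A1_diag C m n) hl1.
Let uA2 := trig_shift_unitmx (A2_trig C m n) (@A2_diag C m n) hl2.
Let uA1s := ctr_trig_shift_unitmx (A1_trig C m n) (@A1_diag C m n) (conj_ihalf_neq hmu1).
Let uA2s := ctr_trig_shift_unitmx (A2_trig C m n) (@A2_diag C m n) (conj_ihalf_neq hmu2).

Let mul_ii : ('i : C) * 'i = -1.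
Proof. by rewrite -expr2 sqrCi. Qed.

Lemma omega_P1 : l1 != mu1 ->
  omega m n t l1 l2 mu1 mu2
  = 'i * (l1 - mu1)^-1 * (u m n t mu1 mu2 *m P1 C m n *m uh m n t l1 l2) ord0 ord0.
Proof.
move=> l1_neq_mu1.
have := displacement_resolvent uT uA1 uA1s uA2 uA2s
  (trig_shift_unitmx (calA_trig C m) (@calA_diag C m) hl2)
  (ctr_trig_shift_unitmx (calA_trig C m) (@calA_diag C m) (conj_ihalf_neq hmu2)) mul_ii
  (A1_displacement m n t) (A2_M31 C m n) (M31_ones C m n) (M21_A2_ctr C m n) (ones_M21 C m n).
rewrite /resolvent => G.
rewrite /omega; apply: mx11_scale_eq; first by rewrite subr_eq0.
rewrite /u /uh /Gamma /Gammah mul_mx_row scale_row_mx opp_row_mx add_row_mx.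
rewrite !mul_col_mx scale_col_mx add_col_mx mul_row_P1_col.
have A12s : ctr (A1 C m n) *m ctr (A2 C m n) = ctr (A2 C m n) *m ctr (A1 C m n).
  by rewrite -!ctrM A1_A2_comm.
rewrite !(mulmx_resolventAC _ uA1s uA2s A12s).
rewrite !(mulmx_resolventAC _ uA2 uA1 (esym (A1_A2_comm C m n))).
exact: G.
Qed.

Lemma omega_P2 : l2 != mu2 ->
  omega m n t l1 l2 mu1 mu2
  = 'i * (l2 - mu2)^-1 * (u m n t mu1 mu2 *m P2 C m n *m uh m n t l1 l2) ord0 ord0.
Proof.
move=> l2_neq_mu2.
have := displacement_resolvent uT uA2 uA2s uA1 uA1s
  (trig_shift_unitmx (calA_trig C n) (@calA_diag C n) hl1)
  (ctr_trig_shift_unitmx (calA_trig C n) (@calA_diag C n) (conj_ihalf_neq hmu1)) mul_ii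
  (A2_displacement m n t) (A1_M32 C m n) (M32_ones C m n) (M22_A1_ctr C m n) (ones_M22 C m n).
rewrite /resolvent => G.
rewrite /omega; apply: mx11_scale_eq; first by rewrite subr_eq0.
rewrite /u /uh /Gamma /Gammah mul_mx_row scale_row_mx opp_row_mx add_row_mx.
by rewrite !mul_col_mx scale_col_mx add_col_mx mul_row_P2_col.
Qed.

End Representation.

Theorem proposition2p1 (C : numClosedFieldType) (m n : nat)
  (t : int -> int -> C) (l1 l2 mu1 mu2 : C) :
  (0 < m)%N -> (0 < n)%N ->
  @tbt C m n t \in unitmx ->
  l1 != 'i / 2%:R -> l2 != 'i / 2%:R ->
  mu1 != - ('i / 2%:R) -> mu2 != - ('i / 2%:R) ->
  (l1 != mu1 ->
     @omega C m n t l1 l2 mu1 mu2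
     = 'i * (l1 - mu1)^-1 * (@u C m n t mu1 mu2 *m @P1 C m n *m @uh C m n t l1 l2) ord0 ord0) /\
  (l2 != mu2 ->
     @omega C m n t l1 l2 mu1 mu2
     = 'i * (l2 - mu2)^-1 * (@u C m n t mu1 mu2 *m @P2 C m n *m @uh C m n t l1 l2) ord0 ord0).
Proof.
move=> _ _ uT hl1 hl2 hmu1 hmu2.
by split; [exact: omega_P1 | exact: omega_P2].
Qed.
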